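(* Let $(E,X,Y)$, with $X=(X_1,\dots,X_d)$, be generated by a structural causal model whose graph $\mathcal{G}$ is a DAG, whose distribution is faithful (and Markov) with respect to $\mathcal{G}$, and in which $E$ is exogenous (i.e. $E$ has no parents). Assume that $E$ is not a parent of $Y$ in $\mathcal{G}$. Then (i) $S_{\mathrm{IAS}}\in\mathcal{I}$, and (ii) $S_{\mathrm{ICP}}\subseteq S_{\mathrm{IAS}}$, with equality if and only if $S_{\mathrm{ICP}}\in\mathcal{I}$.
   Context: For $S\subseteq[d]=\{1,\dots,d\}$, write $X_S=(X_j)_{j\in S}$. A set $S\subseteq[d]$ is called invariant if $Y\perp\!\!\!\perp E\mid X_S$; $\mathcal{I}$ denotes the collection of all invariant sets. A set $S$ is minimally invariant if $S\in\mathcal{I}$ and no proper subset $S'\subsetneq S$ lies in $\mathcal{I}$. Define $S_{\mathrm{ICP}}=\bigcap_{S\in\mathcal{I}}S$ (with $S_{\mathrm{ICP}}=\emptyset$ if $\mathcal{I}=\emptyset$) and $S_{\mathrm{IAS}}=\bigcup_{S\text{ minimally invariant}}S$ (with the union over the empty collection being $\emptyset$). *)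

From mathcomp Require Import all_boot.
Set Implicit Arguments. Unset Strict Implicit. Unset Printing Implicit Defensive.

Definition node (d : nat) : finType := ('I_d + bool)%type.
Definition nE {d : nat} : node d := inr false.
Definition nY {d : nat} : node d := inr true.
Definition nX {d : nat} (j : 'I_d) : node d := inl j.

Section Graph.
Variable d : nat.
(* edge u v : u -> v, i.e. u is a parent of v in G *)
Variable edge : rel (node d).

Definition is_dag : Prop := forall u v, edge u v -> ~~ connect edge v u.

Definition adj (u v : node d) : bool := edge u v || edge v u.

Definition is_path (p : seq (node d)) : Prop :=
  [/\ 1 < size p, uniq p &
      forall i, i.+1 < size p -> adj (nth nE p i) (nth nE p i.+1)].

Definition collider (p : seq (node d)) (i : nat) : bool :=
  edge (nth nE p i.-1) (nth nE p i) && edge (nth nE p i.+1) (nth nE p i).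

Definition d_connecting (Z : {set node d}) (p : seq (node d)) : Prop :=
  forall i, 0 < i -> i.+1 < size p ->
    (collider p i -> exists2 z, z \in Z & connect edge (nth nE p i) z) /\
    (~~ collider p i -> nth nE p i \notin Z).

Definition dsep (A B Z : {set node d}) : Prop :=
  forall p, is_path p -> head nE p \in A -> last nE p \in B ->
    ~ d_connecting Z p.

Definition pairwise_disjoint (A B C : {set node d}) : Prop :=
  [/\ [disjoint A & B], [disjoint A & C] & [disjoint B & C]].

(* CI A B C : X_A is independent of X_B given X_C under the distribution *)
Variable CI : {set node d} -> {set node d} -> {set node d} -> bool.

Definition markov : Prop :=
  forall A B C, pairwise_disjoint A B C -> dsep A B C -> CI A B C.
Definition faithful : Prop :=
  forall A B C, pairwise_disjoint A B C -> CI A B C -> dsep A B C.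

Definition exogenous_E : Prop := forall v, ~~ edge v nE.

Definition is_invariant (S : {set 'I_d}) : bool :=
  CI [set nY] [set nE] [set nX j | j in S].

Definition min_invariant (S : {set 'I_d}) : bool :=
  is_invariant S && [forall S' : {set 'I_d}, (S' \proper S) ==> ~~ is_invariant S'].

Definition S_ICP : {set 'I_d} :=
  if [exists S, is_invariant S] then \bigcap_(S | is_invariant S) S else set0.

Definition S_IAS : {set 'I_d} := \bigcup_(S | min_invariant S) S.

End Graph.

From mathcomp Require Import all_boot zify.
Set Implicit Arguments. Unset Strict Implicit. Unset Printing Implicit Defensive.

(* Under the Markov and faithfulness assumptions, S is invariant exactly when Y and E
   are d-separated by X_S.  Because E has no parents, every interior node of a path from
   Y to E that is d-connecting given a set of ancestors of Y is itself an ancestor of Y.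
   Hence intersecting an invariant set with An(Y) keeps it invariant, so every minimally
   invariant set lies in An(Y).  Conversely, enlarging an invariant set inside An(Y)
   keeps it invariant: a path opened by the new conditioning nodes is rerouted at its
   last blocked collider c along a directed path from c down to Y, whose nodes all
   descend from c and so avoid the old conditioning set.  The parents of Y form an
   invariant set, so minimally invariant sets exist, and S_IAS, which lies between one
   of them and An(Y), is invariant.  The rest is set algebra: S_ICP is contained in every
   invariant set, and when it is invariant it is the only minimally invariant set. *)

Section SeqSplice.
Variables (T : Type) (x0 : T).
Implicit Types (q s : seq T).

Lemma nth_splice_l q s f i : f < size q -> nth x0 s 0 = nth x0 q f -> i <= f ->
  nth x0 (take f q ++ s) i = nth x0 q i.
Proof.
move=> lt_fq s0 le_if; rewrite nth_cat size_takel; last exact: ltnW.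
case: ltnP => [lt_if | le_fi]; first by rewrite nth_take.
have -> : i = f by apply/eqP; rewrite eqn_leq le_if.
by rewrite subnn.
Qed.

Lemma nth_splice_r q s f i : f <= size q -> f <= i ->
  nth x0 (take f q ++ s) i = nth x0 s (i - f).
Proof. by move=> le_fq le_fi; rewrite nth_cat size_takel // ltnNge le_fi. Qed.

End SeqSplice.

Lemma first_meet (T : finType) (x0 : T) (p q : seq T) m :
  m < size p -> nth x0 p m \in q ->
  exists f k, [/\ f < size q, m <= k < size p, nth x0 q f = nth x0 p k &
                  forall i, i < f -> nth x0 q i \notin drop k p].
Proof.
move=> lt_mp pm_q.
pose P f := (f < size q) && (nth x0 q f \in drop m p).
have : exists f, P f.
  exists (index (nth x0 p m) q); rewrite /P index_mem pm_q nth_index //.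
  by rewrite -[m in nth _ _ m]addn0 -nth_drop mem_nth // size_drop subn_gt0.
case/ex_minnP => f /andP [lt_fq qf_in] f_min.
exists f, (m + index (nth x0 q f) (drop m p)); split=> //.
- by rewrite leq_addr -ltn_subRL -size_drop index_mem.
- by rewrite -nth_drop nth_index.
move=> i lt_if; apply/negP; rewrite addnC -drop_drop => /mem_drop qi_in.
by have := f_min i; rewrite /P qi_in (ltn_trans lt_if lt_fq) leqNgt lt_if => /(_ isT).
Qed.

Lemma connect_rev_chain (T : finType) (e : rel T) x0 x y : connect e x y ->
  exists q : seq T, [/\ uniq q, nth x0 q 0 = y, x \in q,
    forall i, i.+1 < size q -> e (nth x0 q i.+1) (nth x0 q i)
    & {subset q <= connect e x}].
Proof.
case/connectP => s xs ->{y}; case: (shortenP xs) => t xt uxt _.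
exists (rev (x :: t)); split; rewrite ?rev_uniq ?mem_rev ?mem_head //.
- by rewrite lastI rev_rcons.
- move: xt; rewrite -rev_path lastI rev_rcons => /(pathP x0) et i.
  by rewrite /= ltnS; apply: et.
- by move=> z; rewrite mem_rev; apply: path_connect.
Qed.

Section DSeparation.
Variables (d : nat) (edge : rel (node d)).
Implicit Types (a b : node d) (Z : {set node d}) (p q : seq (node d)).

Definition open_at Z p i : Prop :=
  (collider edge p i -> exists2 z, z \in Z & connect edge (nth nE p i) z) /\
  (~~ collider edge p i -> nth nE p i \notin Z).

Lemma open_at_nth Z p r i j :
  nth nE r i.-1 = nth nE p j.-1 -> nth nE r i = nth nE p j ->
  nth nE r i.+1 = nth nE p j.+1 -> open_at Z p j -> open_at Z r i.
Proof. by rewrite /open_at /collider => -> -> ->. Qed.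

Lemma dag_edge_asym : is_dag edge -> forall u v, edge u v -> ~~ edge v u.
Proof. by move=> dag u v /dag; apply: contra; apply: connect1. Qed.

Lemma noncollider_next p i :
  adj edge (nth nE p i.+1) (nth nE p i.+2) -> edge (nth nE p i) (nth nE p i.+1) ->
  ~~ collider edge p i.+1 -> edge (nth nE p i.+1) (nth nE p i.+2).
Proof. by rewrite /adj /collider /= => /orP [//| ->] ->. Qed.

Lemma noncollider_prev p i :
  adj edge (nth nE p i) (nth nE p i.+1) -> edge (nth nE p i.+2) (nth nE p i.+1) ->
  ~~ collider edge p i.+1 -> edge (nth nE p i.+1) (nth nE p i).
Proof. by rewrite /adj /collider /= andbC => /orP [-> | //] ->. Qed.

Lemma d_connecting_out_edge Z p i :
  is_path edge p -> d_connecting edge Z p -> (forall u, ~~ edge u (last nE p)) ->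
  i.+1 < size p -> edge (nth nE p i) (nth nE p i.+1) ->
  exists2 z, z \in Z & connect edge (nth nE p i) z.
Proof.
move=> [_ _ adjp] dc root; have [k] := ubnP (size p - i).
elim: k i => // k IH i lt_k lt_ip e_i.
have [lt_i2p | le_pi2] := ltnP i.+2 (size p); last first.
  have last_i1 : i.+1 = (size p).-1 by lia.
  by move: e_i; rewrite last_i1 nth_last (negbTE (root _)).
have [z Zz cz] : exists2 z, z \in Z & connect edge (nth nE p i.+1) z.
  have [col_i1 | ncol_i1] := boolP (collider edge p i.+1).
    exact: (dc i.+1 isT lt_i2p).1.
  by apply: (IH i.+1) => //; [lia | apply: noncollider_next => //; apply: adjp].
by exists z => //; apply: connect_trans (connect1 e_i) cz.
Qed.

Lemma d_connecting_in_edge Z p i :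
  is_path edge p -> d_connecting edge Z p ->
  i.+1 < size p -> edge (nth nE p i.+1) (nth nE p i) ->
  connect edge (nth nE p i.+1) (head nE p) \/
  exists2 z, z \in Z & connect edge (nth nE p i.+1) z.
Proof.
move=> [_ _ adjp] dc; elim: i => [|i IH] lt_ip e_i.
  by left; rewrite -nth0; apply: connect1.
have [col_i1 | ncol_i1] := boolP (collider edge p i.+1).
  have [z Zz cz] := (dc i.+1 isT lt_ip).1 col_i1.
  by right; exists z => //; apply: connect_trans (connect1 e_i) cz.
have e_i1 : edge (nth nE p i.+1) (nth nE p i).
  by apply: noncollider_prev => //; apply: adjp; lia.
case: (IH (ltnW lt_ip) e_i1) => [c_head | [z Zz cz]].
  by left; apply: connect_trans (connect1 e_i) c_head.
by right; exists z => //; apply: connect_trans (connect1 e_i) cz.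
Qed.

Lemma d_connecting_interior_anc Z p i :
  is_path edge p -> d_connecting edge Z p -> (forall u, ~~ edge u (last nE p)) ->
  {in Z, forall z, connect edge z (head nE p)} ->
  0 < i -> i.+1 < size p -> connect edge (nth nE p i) (head nE p).
Proof.
move=> pp dc root Z_anc i_gt0 lt_ip.
have anc_Z (v : node d) :
    (exists2 z, z \in Z & connect edge v z) -> connect edge v (head nE p).
  by case=> z Zz cz; apply: connect_trans cz (Z_anc z Zz).
have [col_i | ncol_i] := boolP (collider edge p i).
  by apply: anc_Z; apply: (dc i i_gt0 lt_ip).1.
case: i i_gt0 lt_ip ncol_i => // i _ lt_ip ncol_i.
have [_ _ adjp] := pp; case/orP: (adjp i (ltnW lt_ip)) => e_i.
  apply: anc_Z; apply: d_connecting_out_edge => //.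
  by apply: noncollider_next => //; apply: adjp.
by case: (d_connecting_in_edge pp dc (ltnW lt_ip) e_i) => // /anc_Z.
Qed.

Lemma dsep_setI_anc a b Z : (forall u, ~~ edge u b) ->
  dsep edge [set a] [set b] Z ->
  dsep edge [set a] [set b] (Z :&: [set v | connect edge v a]).
Proof.
move=> root sep p pp ha hb dc; apply: (sep p pp ha hb) => i i_gt0 lt_ip.
move: ha hb; rewrite !inE => /eqP ha /eqP hb.
have [col_i ncol_i] := dc i i_gt0 lt_ip; split.
  by case/col_i => z; rewrite inE => /andP [Zz _] cz; exists z.
have anc_i : connect edge (nth nE p i) a.
  rewrite -ha; apply: (d_connecting_interior_anc pp dc) => //; first by rewrite hb.
  by move=> z; rewrite !inE -ha => /andP [].
by move=> /ncol_i; rewrite !inE anc_i andbT.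
Qed.

Lemma dsep_parents a b : is_dag edge -> (forall u, ~~ edge u b) -> ~~ edge b a ->
  dsep edge [set a] [set b] [set v | edge v a].
Proof.
move=> dag root ba p pp; rewrite !inE -nth0 => /eqP ha /eqP hb dc.
have [lt1p _ adjp] := pp; rewrite -hb in root.
case/orP: (adjp 0 lt1p) => e01.
  have [z] := d_connecting_out_edge pp dc root lt1p e01.
  by rewrite inE ha => /dag /negP nc /nc.
have [lt2p | le_p2] := ltnP 2 (size p); last first.
  have last1 : 1 = (size p).-1 by lia.
  by move: e01; rewrite ha last1 nth_last hb (negbTE ba).
have ncol1 : ~~ collider edge p 1.
  by rewrite /collider /=; apply/nandP; left; apply: dag_edge_asym.
by move: ((dc 1 isT lt2p).2 ncol1); rewrite inE -ha e01.
Qed.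

Lemma splice_is_path p q f k :
  is_path edge p -> uniq q -> 0 < f < size q -> k < size p ->
  nth nE q f = nth nE p k ->
  (forall i, i < f -> adj edge (nth nE q i) (nth nE q i.+1)) ->
  (forall i, i < f -> nth nE q i \notin drop k p) ->
  is_path edge (take f q ++ drop k p).
Proof.
move=> [_ up adjp] uq /andP [f_gt0 lt_fq] lt_kp qf adjq disj.
have pk0 : nth nE (drop k p) 0 = nth nE q f by rewrite nth_drop addn0.
have le_fq := ltnW lt_fq.
have size_r : size (take f q ++ drop k p) = f + (size p - k).
  by rewrite size_cat size_takel // size_drop.
split; first by rewrite size_r; lia.
- rewrite cat_uniq take_uniq ?drop_uniq //= andbT has_sym.
  apply/hasPn => v /(nthP nE) [i]; rewrite size_takel // => lt_if.
  by rewrite nth_take // => <-; apply: disj.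
move=> i; rewrite size_r => lt_i.
have [lt_if | le_fi] := ltnP i f.
  rewrite (nth_splice_l lt_fq pk0 (ltnW lt_if)) (nth_splice_l lt_fq pk0 lt_if).
  exact: adjq.
rewrite !nth_splice_r ?(leqW le_fi) // subSn // !nth_drop addnS.
by apply: adjp; lia.
Qed.

Lemma reroute_at_collider Z p m :
  is_dag edge -> is_path edge p -> 0 < m -> m < size p ->
  connect edge (nth nE p m) (head nE p) ->
  {in Z, forall z, ~~ connect edge (nth nE p m) z} ->
  (forall s, m < s -> s.+1 < size p -> open_at Z p s) ->
  exists2 r, [/\ is_path edge r, head nE r = head nE p & last nE r = last nE p]
           & d_connecting edge Z r.
Proof.
move=> dag pp m_gt0 lt_mp c_anc c_Z open_tail.
have [q [uq q0 cq qe q_desc]] := connect_rev_chain nE c_anc.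
have [f [k [lt_fq /andP [le_mk lt_kp] qf before_f]]] := first_meet lt_mp cq.
have f_gt0 : 0 < f.
  have k_neq0 : k != 0 by rewrite -lt0n (leq_trans m_gt0 le_mk).
  rewrite lt0n; apply/eqP => f0; move/eqP: qf; rewrite f0 q0 -nth0.
  case: pp => _ up _; rewrite nth_uniq ?(ltn_trans m_gt0 lt_mp) //.
  by rewrite eq_sym (negbTE k_neq0).
set r := take f q ++ drop k p.
have pk0 : nth nE (drop k p) 0 = nth nE q f by rewrite nth_drop addn0.
have le_fq := ltnW lt_fq.
have size_r : size r = f + (size p - k) by rewrite size_cat size_takel // size_drop.
have r_pre i : i <= f -> nth nE r i = nth nE q i by apply: nth_splice_l.
have r_suf i : f <= i -> nth nE r i = nth nE p (k + (i - f)).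
  by move=> le_fi; rewrite nth_splice_r // nth_drop.
have rp : is_path edge r.
  apply: splice_is_path; rewrite ?f_gt0 //.
  by move=> i lt_if; rewrite /adj qe ?orbT //; lia.
exists r; first split=> //.
- by rewrite -nth0 r_pre // q0.
- rewrite -!nth_last size_r r_suf; last lia.
  by congr (nth _ _ _); lia.
move=> i i_gt0 lt_ir; rewrite size_r in lt_ir.
(* On the prefix taken from [q] every edge points towards [head p], so there is no
   collider, and every node descends from [nth p m], so none lies in [Z]. *)
have [le_if | lt_fi] := leqP i f.
  have ncol : ~~ collider edge r i.
    rewrite /collider (r_pre i) // (r_pre i.-1); last lia.
    apply/nandP; left; apply: dag_edge_asym => //.
    by have := qe i.-1; rewrite prednK //; apply; lia.
  split; first by rewrite (negbTE ncol).
  move=> _; rewrite r_pre //; apply/negP => /c_Z /negP; apply.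
  by apply/q_desc/mem_nth; apply: leq_ltn_trans le_if lt_fq.
apply: (open_at_nth (j := k + (i - f))).
- by rewrite r_suf; [congr (nth _ _ _) |]; lia.
- by rewrite r_suf // ltnW.
- by rewrite r_suf; [congr (nth _ _ _) |]; lia.
- by apply: open_tail; lia.
Qed.

Lemma d_connecting_shrink Z Z' p :
  is_dag edge -> Z \subset Z' -> {in Z', forall z, connect edge z (head nE p)} ->
  is_path edge p -> d_connecting edge Z' p ->
  exists2 r, [/\ is_path edge r, head nE r = head nE p & last nE r = last nE p]
           & d_connecting edge Z r.
Proof.
move=> dag sZZ' Z'_anc pp dc.
pose blocked i := [&& 0 < i, i.+1 < size p, collider edge p i &
                   ~~ [exists z in Z, connect edge (nth nE p i) z]].
have open_unblocked i : 0 < i -> i.+1 < size p -> ~~ blocked i -> open_at Z p i.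
  move=> i_gt0 lt_ip; rewrite /blocked i_gt0 lt_ip /= => unblocked.
  have [_ ncol_i] := dc i i_gt0 lt_ip; split.
    by move=> col; move: unblocked; rewrite col negbK => /exists_inP [z]; exists z.
  by move/ncol_i; apply: contra; apply: (subsetP sZZ').
have [/existsP [m0 blocked_m0] | no_blocked] :=
  boolP [exists i : 'I_(size p), blocked i]; last first.
  exists p => // i i_gt0 lt_ip; apply: open_unblocked => //.
  by apply: contra no_blocked => b; apply/existsP; exists (Ordinal (ltnW lt_ip)).
have blocked_le i : blocked i -> i <= size p by case/and3P => _ /ltnW /ltnW.
case: (ex_maxnP (ex_intro blocked _ blocked_m0) blocked_le) => m blocked_m max_m.
case/and4P: blocked_m => m_gt0 lt_mp col_m /exists_inPn no_Z.
apply: (reroute_at_collider (m := m)) => //.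
- exact: ltnW.
- have [z Z'z cz] := (dc m m_gt0 lt_mp).1 col_m.
  exact: connect_trans cz (Z'_anc z Z'z).
- move=> s lt_ms lt_sp; apply: open_unblocked => //.
    exact: leq_ltn_trans (leq0n m) lt_ms.
  by apply/negP => /max_m; rewrite leqNgt lt_ms.
Qed.

Lemma dsep_superset a b Z Z' : is_dag edge -> Z \subset Z' ->
  {in Z', forall z, connect edge z a} ->
  dsep edge [set a] [set b] Z -> dsep edge [set a] [set b] Z'.
Proof.
move=> dag sZZ' Z'_anc sep p pp ha hb dc.
have Z'_anc_p : {in Z', forall z, connect edge z (head nE p)}.
  by move: ha; rewrite inE => /eqP ->.
have [r [rp hr hl] dcr] := d_connecting_shrink dag sZZ' Z'_anc_p pp dc.
by apply: (sep r rp); rewrite ?hr ?hl.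
Qed.

End DSeparation.

Section InvariantSets.
Variables (d : nat) (CI : {set node d} -> {set node d} -> {set node d} -> bool).
Implicit Types S : {set 'I_d}.

Lemma S_ICP_sub S : is_invariant CI S -> S_ICP CI \subset S.
Proof.
move=> invS; rewrite /S_ICP; case: ifP => [_ | /existsP []]; last by exists S.
exact: bigcap_inf.
Qed.

Lemma min_invariant_exists : (exists S, is_invariant CI S) -> exists S, min_invariant CI S.
Proof.
move/ex_minset => [S /minsetP [invS S_min]]; exists S; rewrite /min_invariant invS.
apply/forallP => S'; apply/implyP => ltS'S; apply/negP => invS'.
by have := ltS'S; rewrite (S_min S' invS' (proper_sub ltS'S)) properxx.
Qed.

Lemma S_ICP_sub_S_IAS : (exists S, is_invariant CI S) -> S_ICP CI \subset S_IAS CI.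
Proof.
move/min_invariant_exists => [S minS].
exact: subset_trans (S_ICP_sub (andP minS).1) (bigcup_sup S minS).
Qed.

Lemma S_IAS_S_ICP : is_invariant CI (S_ICP CI) -> S_IAS CI = S_ICP CI.
Proof.
move=> invICP; apply/eqP.
rewrite eqEsubset S_ICP_sub_S_IAS ?andbT; last by exists (S_ICP CI).
apply/bigcupsP => S /andP [invS /forallP minS].
by have := minS (S_ICP CI); rewrite invICP properE (S_ICP_sub invS) /= implybF negbK.
Qed.

End InvariantSets.

Section InvariantAncestry.
Variables (d : nat) (edge : rel (node d))
  (CI : {set node d} -> {set node d} -> {set node d} -> bool).
Hypotheses (dag : is_dag edge) (markovCI : markov edge CI) (faithfulCI : faithful edge CI)
  (exoE : exogenous_E edge) (E_notin_paY : ~~ edge nE nY).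
Implicit Types S : {set 'I_d}.

Definition ancestors_Y : {set 'I_d} := [set j | connect edge (nX j) nY].

Lemma is_invariantE S : is_invariant CI S <-> dsep edge [set nY] [set nE] [set nX j | j in S].
Proof.
have disj : pairwise_disjoint [set nY] [set nE] [set nX j | j in S].
  split; rewrite disjoint_subset; apply/subsetP => v; rewrite !inE => /eqP -> //=.
  - by apply/imsetP => -[].
  - by apply/imsetP => -[].
by split; [apply: faithfulCI | apply: markovCI].
Qed.

Lemma invariant_setI_ancestors S : is_invariant CI S -> is_invariant CI (S :&: ancestors_Y).
Proof.
move/is_invariantE/(dsep_setI_anc exoE) => sep; apply/is_invariantE.
suff -> : [set nX j | j in S :&: ancestors_Y] =
          [set nX j | j in S] :&: [set v | connect edge v nY] by [].
apply/setP => v; rewrite inE; apply/imsetP/andP => [[j] | [/imsetP [j jS ->]]].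
- by rewrite !inE => /andP [jS jA] ->; rewrite imset_f.
- by rewrite inE => jA; exists j; rewrite // !inE jS.
Qed.

Lemma min_invariant_sub_ancestors S : min_invariant CI S -> S \subset ancestors_Y.
Proof.
case/andP => invS /forallP minS; have := minS (S :&: ancestors_Y).
rewrite invariant_setI_ancestors // properE subsetIl /= implybF negbK => sub.
exact: subset_trans sub (subsetIr _ _).
Qed.

Lemma parents_Y_invariant : is_invariant CI [set j | edge (nX j) nY].
Proof.
apply/is_invariantE.
suff -> : [set nX j | j in [set j | edge (nX j) nY]] = [set v | edge v nY].
  exact: dsep_parents.
have /negbTE nYY : ~~ edge nY nY by apply/negP => e; move: (dag_edge_asym dag e); rewrite e.
apply/setP => -[j | []]; rewrite !inE.
- apply/imsetP/idP => [[i] | e]; last by exists j; rewrite ?inE.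
  by rewrite inE => e [->].
- by rewrite nYY; apply/imsetP => -[].
- by rewrite (negbTE E_notin_paY); apply/imsetP => -[].
Qed.

Lemma S_IAS_invariant : is_invariant CI (S_IAS CI).
Proof.
have [S minS] :=
  min_invariant_exists (ex_intro (is_invariant CI) _ parents_Y_invariant).
have IAS_anc : S_IAS CI \subset ancestors_Y.
  by apply/bigcupsP => S'; apply: min_invariant_sub_ancestors.
apply/is_invariantE; apply: (dsep_superset dag (imsetS _ (bigcup_sup S minS))).
  by move=> _ /imsetP [j /(subsetP IAS_anc) + ->]; rewrite inE.
by apply/is_invariantE; case/andP: minS.
Qed.

End InvariantAncestry.

Theorem proposition3 (d : nat) (edge : rel (node d))
  (CI : {set node d} -> {set node d} -> {set node d} -> bool) :
  is_dag edge ->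
  markov edge CI ->
  faithful edge CI ->
  exogenous_E edge ->
  ~~ edge nE nY ->
  is_invariant CI (S_IAS CI) /\
  ((S_ICP CI) \subset (S_IAS CI) /\
   (S_ICP CI = S_IAS CI :> {set 'I_d} <-> is_invariant CI (S_ICP CI))).
Proof.
move=> dag markovCI faithfulCI exoE E_notin_paY.
have IAS_inv := S_IAS_invariant dag markovCI faithfulCI exoE E_notin_paY.
have paY_inv := parents_Y_invariant dag markovCI faithfulCI exoE E_notin_paY.
have ICP_sub := S_ICP_sub_S_IAS (ex_intro (is_invariant CI) _ paY_inv).
by split=> //; split=> //; split=> [-> | /S_IAS_S_ICP ->].
Qed.
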